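(* Let $n \ge 3$ be an integer and let $I$ be a degree-based topological index with coefficients $c_{12},c_{13},c_{22},c_{23},c_{33}$. Define $c'_{12} = c_{12}-4c_{22}+3c_{23}$, $c'_{13} = c_{13}-3c_{22}+2c_{23}$, $c'_{33} = c_{22}-2c_{23}+c_{33}$. If $\max\{0,-c'_{33}\}<\min\{c'_{12},c'_{13}\}$, then the cycle $C_n$ on $n$ vertices is, up to isomorphism, the only graph in $\mathcal{G}_3(n,n)$ that minimizes $I$.
   Context: For integers $n,m$, $\mathcal{G}_3(n,m)$ denotes the set of simple connected undirected graphs (chemical graphs) with $n$ vertices, $m$ edges and maximum degree at most $3$; in particular $\mathcal{G}_3(n,n)$ is the set of connected unicyclic graphs of order $n$ with maximum degree at most $3$. For a graph $G$ and $1\le i\le j$, an $ij$-edge is an edge whose endpoints have degrees $i$ and $j$, and $m_{ij}$ denotes the number of $ij$-edges of $G$. A degree-based topological index $I$ is a function on chemical graphs of order $n\ge 3$ of the form $I(G)=c_{12}m_{12}+c_{13}m_{13}+c_{22}m_{22}+c_{23}m_{23}+c_{33}m_{33}$, where the $c_{ij}$ are fixed real numbers. *)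

From mathcomp Require Import all_boot all_order all_algebra.
Set Implicit Arguments. Unset Strict Implicit. Unset Printing Implicit Defensive.
Import Order.TTheory GRing.Theory Num.Theory.

Definition simple_graph (n : nat) (e : rel 'I_n) : Prop :=
  (forall x y, e x y = e y x) /\ (forall x, ~~ e x x).

Definition deg (n : nat) (e : rel 'I_n) (v : 'I_n) : nat := #|[set w | e v w]|.

Definition edge_set (n : nat) (e : rel 'I_n) : {set 'I_n * 'I_n} :=
  [set p | e p.1 p.2 && (p.1 < p.2)%N].

Definition num_edges (n : nat) (e : rel 'I_n) : nat := #|edge_set e|.

Definition connected_graph (n : nat) (e : rel 'I_n) : Prop :=
  forall x y, connect e x y.

Definition in_G3 (n m : nat) (e : rel 'I_n) : Prop :=
  simple_graph e /\ connected_graph e /\ num_edges e = m /\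
  (forall v, (deg e v <= 3)%N).

Definition m_ij (n : nat) (e : rel 'I_n) (i j : nat) : nat :=
  #|[set p in edge_set e |
      ((deg e p.1 == i) && (deg e p.2 == j)) ||
      ((deg e p.1 == j) && (deg e p.2 == i))]|.

Definition topo_index (R : pzRingType) (c12 c13 c22 c23 c33 : R)
  (n : nat) (e : rel 'I_n) : R :=
  c12 * (m_ij e 1 2)%:R + c13 * (m_ij e 1 3)%:R + c22 * (m_ij e 2 2)%:R
  + c23 * (m_ij e 2 3)%:R + c33 * (m_ij e 3 3)%:R.

Definition cycle_graph (n : nat) : rel 'I_n :=
  fun x y => (val y == (val x).+1 %% n) || (val x == (val y).+1 %% n).

Definition graph_iso (n : nat) (e1 e2 : rel 'I_n) : Prop :=
  exists f : 'I_n -> 'I_n, bijective f /\ forall x y, e1 x y = e2 (f x) (f y).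

From mathcomp Require Import all_boot all_order all_algebra.
From mathcomp Require Import zify ring lra.
Set Implicit Arguments. Unset Strict Implicit. Unset Printing Implicit Defensive.
Import Order.TTheory GRing.Theory Num.Theory.

(* Write n_d for the number of vertices of degree d of G in G_3(n,n). Counting
   edges (sum of the m_ij is n) and vertices (each edge xy contributes
   1/d(x) + 1/d(y), and these add up to n) eliminates m_22 and m_23:
     I(G) = c_22 n + c'_12 m_12 + c'_13 m_13 + c'_33 m_33.
   Counting edge ends at degree-3 vertices then gives n_3 = m_12 + m_13, and a
   connected graph with n edges has at most |S| edges inside any vertex set S,
   so m_33 <= n_3 = m_12 + m_13. Under the hypothesis on the c' this makes
   I(G) > I(C_n) = c_22 n unless m_12 = m_13 = 0, i.e. unless G is 2-regular;
   and a connected 2-regular graph is traced out by its non-backtracking walk,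
   which first closes up at its start after exactly n steps, so G is C_n. *)

Definition same_pair (d1 d2 i j : nat) : bool :=
  ((d1 == i) && (d2 == j)) || ((d1 == j) && (d2 == i)).

Lemma chemical_pair_split (F : nat -> nat -> nat) d1 d2 :
  (forall i j, F i j = F j i) -> 0 < d1 <= 3 -> 0 < d2 <= 3 ->
  ~~ ((d1 == 1) && (d2 == 1)) ->
  F d1 d2 = F 1 2 * same_pair d1 d2 1 2 + F 1 3 * same_pair d1 d2 1 3
          + F 2 2 * same_pair d1 d2 2 2 + F 2 3 * same_pair d1 d2 2 3
          + F 3 3 * same_pair d1 d2 3 3.
Proof.
move=> FC; case: d1 => [|[|[|[|d1]]]] //; case: d2 => [|[|[|[|d2]]]] //= _ _ _;
  by rewrite ?muln0 ?muln1 ?addn0 ?add0n // FC.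
Qed.

Section SimpleGraph.
Variables (n : nat) (e : rel 'I_n).

Lemma sum_deg_indicator d :
  \sum_v deg e v * (deg e v == d) = d * #|[set v | deg e v == d]|.
Proof.
rewrite mulnC -sum_nat_const [RHS]big_mkcond /=; apply: eq_bigr => v _.
by rewrite inE; case: eqP => [->|_]; rewrite ?muln1 ?muln0.
Qed.

Lemma m_ij_regular d i j : (forall v, deg e v = d) -> i != d -> m_ij e i j = 0.
Proof.
move=> dE /negbTE ne_id; apply: eq_card0 => p.
by rewrite !inE !dE [d == i]eq_sym ne_id /= !andbF.
Qed.

Lemma m_ij_sum i j :
  m_ij e i j = \sum_(p in edge_set e) same_pair (deg e p.1) (deg e p.2) i j.
Proof.
rewrite /m_ij -sum1_card [LHS]big_mkcond [RHS]big_mkcond; apply: eq_bigr => p _.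
by rewrite !inE /same_pair; case: (e _ _ && _).
Qed.

Lemma neighborsE v (A : {set 'I_n}) w :
  A \subset [set x | e v x] -> deg e v <= #|A| -> e v w = (w \in A).
Proof.
move=> sub le; have /eqP <- : [set x | e v x] == A by rewrite eq_sym eqEcard sub.
by rewrite inE.
Qed.

Hypothesis e_sym : forall x y, e x y = e y x.
Hypothesis e_irr : forall x, ~~ e x x.

Lemma handshake (g : 'I_n -> nat) :
  \sum_(p in edge_set e) (g p.1 + g p.2) = \sum_v deg e v * g v.
Proof.
transitivity (\sum_v \sum_w (if e v w && (v < w) then g v + g w else 0)).
  by rewrite [RHS]pair_bigA big_mkcond; apply: eq_bigr => -[v w] _; rewrite inE.
have split_lt v w : (if e v w then g v else 0) =
    (if e v w && (v < w) then g v else 0) + (if e w v && (w < v) then g v else 0).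
  rewrite (e_sym w v); case: (ltngtP v w) => [||/val_inj ->];
    rewrite ?andbT ?andbF ?addn0 //.
  by rewrite (negbTE (e_irr w)).
transitivity (\sum_v \sum_w (if e v w then g v else 0)).
  under [RHS]eq_bigr do rewrite (eq_bigr _ (fun w _ => split_lt _ w)) big_split /=.
  rewrite big_split /= [X in _ = _ + X]exchange_big -big_split /=.
  by apply: eq_bigr => v _; rewrite -big_split; apply: eq_bigr => w _; case: ifP.
apply: eq_bigr => v _; rewrite -big_mkcond /= /deg -sum_nat_const.
by apply: eq_bigl => w; rewrite inE.
Qed.

Lemma num_edges_regular d : (forall v, deg e v = d) -> 2 * num_edges e = d * n.
Proof.
move=> dE; have := handshake (fun _ => 1); rewrite sum_nat_const.
under eq_bigr do rewrite dE muln1.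
by rewrite sum_nat_const card_ord /num_edges; lia.
Qed.

Definition edge_of (u v : 'I_n) : 'I_n * 'I_n := if u < v then (u, v) else (v, u).

Lemma edge_of_in u v : e u v -> edge_of u v \in edge_set e.
Proof.
move=> euv; rewrite /edge_of inE; case: ltngtP => [lt|gt|/val_inj eq_uv] /=.
- by rewrite euv.
- by rewrite e_sym euv.
- by rewrite eq_uv (negbTE (e_irr v)) in euv.
Qed.

Section Connected.
Hypothesis e_conn : connected_graph e.

Lemma connected_closed_setT (S : {set 'I_n}) x :
  x \in S -> (forall u v, u \in S -> e u v -> v \in S) -> S = setT.
Proof.
move=> xS closedS; apply/setP => y; rewrite inE.
have /connectP [p + ->] := e_conn x y.
by elim: p x xS => [|z p IH] x xS //= /andP [/(closedS _ _ xS) zS /(IH _ zS)].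
Qed.

Lemma deg_gt0 v : 1 < n -> 0 < deg e v.
Proof.
move=> n_gt1; rewrite lt0n; apply: contraTneq n_gt1 => deg0.
suff vT : [set v] = setT by move: (cards1 v); rewrite vT cardsT card_ord => ->.
apply: (connected_closed_setT (set11 v)) => u w /set1P -> evw.
by move: deg0; rewrite /deg (cardD1 w) inE evw.
Qed.

Lemma no_adjacent_leaves u v : 2 < n -> e u v -> ~~ ((deg e u == 1) && (deg e v == 1)).
Proof.
move=> n_gt2 euv; apply/negP => /andP [/eqP du /eqP dv].
have leafE x y : deg e x = 1 -> e x y -> forall w, e x w = (w == y).
  move=> dx exy w; rewrite (@neighborsE x [set y]) ?inE ?cards1 ?dx //.
  by rewrite sub1set inE.
suff uvT : [set u; v] = setT.
  by move: (cards2 u v) n_gt2; rewrite uvT cardsT card_ord => ->; case: (u != v).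
apply: (connected_closed_setT (setU11 u [set v])) => x w.
rewrite !inE => /orP [] /eqP -> exw.
- by rewrite (leafE _ _ du euv) in exw; rewrite exw orbT.
- by rewrite e_sym in euv; rewrite (leafE _ _ dv euv) in exw; rewrite exw.
Qed.

Lemma crossing_edge (S : {set 'I_n}) x y : x \in S -> y \notin S ->
  exists u v, [/\ u \in S, v \notin S & e u v].
Proof.
move=> xS yS; case: (boolP [exists u, exists v, [&& u \in S, v \notin S & e u v]]).
  by move=> /existsP [u /existsP [v /and3P [uS vS euv]]]; exists u, v.
rewrite negb_exists => /forallP noedge.
suff S_T : S = setT by rewrite S_T inE in yS.
apply: (connected_closed_setT xS) => u v uS euv; apply: contraT => vS.
by have := noedge u; rewrite negb_exists => /forallP /(_ v); rewrite uS vS euv.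
Qed.

(* Induction on |~: S|: connectivity gives an edge uv leaving S, and adding v
   to S removes at least uv from the leaving edges. *)
Lemma leaving_edges_ge (S : {set 'I_n}) : S != set0 ->
  #|~: S| <= #|[set p in edge_set e | (p.1 \notin S) || (p.2 \notin S)]|.
Proof.
have [k] := ubnP #|~: S|; elim: k S => // k IH S ltSk /set0Pn [x xS].
have [->|/set0Pn [y]] := eqVneq (~: S) set0; first by rewrite cards0.
rewrite inE => yS; have [u [v [uS vS euv]]] := crossing_edge xS yS.
set S' := v |: S.
have cardS' : #|~: S| = #|~: S'|.+1.
  by have := cardsC S; have := cardsC S'; rewrite cardsU1 vS card_ord; lia.
have ltS' : #|[set p in edge_set e | (p.1 \notin S') || (p.2 \notin S')]|
    < #|[set p in edge_set e | (p.1 \notin S) || (p.2 \notin S)]|.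
  apply: proper_card; apply/properP; split.
    apply/subsetP => p; rewrite !inE negb_or !negb_or => /andP [-> /=].
    by case/orP => /andP [_ ->]; rewrite ?orbT.
  have uv_in := edge_of_in euv.
  exists (edge_of u v); rewrite in_set uv_in /edge_of;
    by case: ifP => _ /=; rewrite ?inE ?eqxx ?uS ?vS ?orbT.
rewrite cardS'; apply: leq_ltn_trans ltS'; apply: IH.
- by rewrite -ltnS -cardS'.
- by apply/set0Pn; exists u; rewrite !inE uS orbT.
Qed.

Lemma inner_edges_le (S : {set 'I_n}) : num_edges e = n ->
  #|[set p in edge_set e | (p.1 \in S) && (p.2 \in S)]| <= #|S|.
Proof.
move=> edges_n; have [->|S_ne0] := eqVneq S set0.
  by rewrite cards0 leqn0 cards_eq0; apply/eqP/setP => p; rewrite !inE !andbF.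
have := leaving_edges_ge S_ne0; have := cardsC S; rewrite card_ord.
have := cardsID [set p | (p.1 \in S) && (p.2 \in S)] (edge_set e).
have -> : edge_set e :&: [set p | (p.1 \in S) && (p.2 \in S)] =
          [set p in edge_set e | (p.1 \in S) && (p.2 \in S)].
  by apply/setP => p; rewrite !inE.
have -> : edge_set e :\: [set p | (p.1 \in S) && (p.2 \in S)] =
          [set p in edge_set e | (p.1 \notin S) || (p.2 \notin S)]
  by apply/setP => p; rewrite !inE negb_and andbC.
rewrite -[#|edge_set e|]/(num_edges e) edges_n => split_n compl_n leaving.
by rewrite -(leq_add2r #|~: S|) compl_n -[X in _ <= X]split_n leq_add2l.
Qed.

End Connected.
End SimpleGraph.

Section Unicyclic.
Variables (n : nat) (e : rel 'I_n).
Hypothesis n_gt2 : 2 < n.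
Hypothesis e_G3 : @in_G3 n n e.

Let e_sym : forall x y, e x y = e y x. Proof. by case: e_G3 => [[]]. Qed.
Let e_irr : forall x, ~~ e x x. Proof. by case: e_G3 => [[]]. Qed.
Let e_conn : connected_graph e. Proof. by case: e_G3 => _ []. Qed.
Let edges_n : num_edges e = n. Proof. by case: e_G3 => _ [_ []]. Qed.
Let deg_le3 v : deg e v <= 3. Proof. by case: e_G3 => _ [_ [_]]. Qed.

Local Notation m i j := (m_ij e i j).
Local Notation deg_count d := #|[set v | deg e v == d]|.

Lemma sum_edges_by_type (F : nat -> nat -> nat) : (forall i j, F i j = F j i) ->
  \sum_(p in edge_set e) F (deg e p.1) (deg e p.2) =
  F 1 2 * m 1 2 + F 1 3 * m 1 3 + F 2 2 * m 2 2 + F 2 3 * m 2 3 + F 3 3 * m 3 3.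
Proof.
move=> FC; rewrite !m_ij_sum !big_distrr -!big_split /=.
apply: eq_bigr => p; rewrite inE => /andP [ep _].
by apply: chemical_pair_split; rewrite ?deg_gt0 ?deg_le3 ?no_adjacent_leaves //;
  exact: ltnW.
Qed.

Lemma edge_count : m 1 2 + m 1 3 + m 2 2 + m 2 3 + m 3 3 = n.
Proof.
have := @sum_edges_by_type (fun _ _ => 1) (fun _ _ => erefl).
by rewrite sum1_card !mul1n => <-.
Qed.

(* [6 %/ d] is exactly [6/d] for 1 <= d <= 3, so each vertex contributes 6. *)
Lemma inverse_degree_count :
  9 * m 1 2 + 8 * m 1 3 + 6 * m 2 2 + 5 * m 2 3 + 4 * m 3 3 = 6 * n.
Proof.
have := @sum_edges_by_type (fun d1 d2 => 6 %/ d1 + 6 %/ d2) (fun _ _ => addnC _ _).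
rewrite /= (handshake e_sym e_irr (fun v => 6 %/ deg e v)) => <-.
rewrite -[in RHS](card_ord n) mulnC -sum_nat_const; apply: eq_bigr => v _.
have := deg_le3 v; have := deg_gt0 e_conn v (ltnW n_gt2).
by case: (deg e v) => [|[|[|[|]]]].
Qed.

Lemma card_deg3 : m 1 3 + m 2 3 + 2 * m 3 3 = 3 * deg_count 3.
Proof.
have := @sum_edges_by_type (fun d1 d2 => (d1 == 3) + (d2 == 3)) (fun _ _ => addnC _ _).
rewrite (handshake e_sym e_irr (fun v => deg e v == 3)) sum_deg_indicator => ->.
by rewrite /= !mul0n !mul1n !add0n addn0.
Qed.

Lemma card_deg1 : m 1 2 + m 1 3 = deg_count 1.
Proof.
have := @sum_edges_by_type (fun d1 d2 => (d1 == 1) + (d2 == 1)) (fun _ _ => addnC _ _).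
rewrite (handshake e_sym e_irr (fun v => deg e v == 1)) sum_deg_indicator mul1n => ->.
by rewrite /= !mul0n !mul1n !addn0.
Qed.

Lemma m33_le_card_deg3 : m 3 3 <= deg_count 3.
Proof.
apply: leq_trans (inner_edges_le e_sym e_irr e_conn _ edges_n).
by apply: eq_leq; apply: eq_card => p; rewrite !inE orbb.
Qed.

Lemma m23_eq : m 2 3 + 2 * m 3 3 = 3 * m 1 2 + 2 * m 1 3.
Proof. by have := edge_count; have := inverse_degree_count; lia. Qed.

Lemma m33_le_leaf_edges : m 3 3 <= m 1 2 + m 1 3.
Proof.
(* 3 n_3 = m_13 + m_23 + 2 m_33 = 3 (m_12 + m_13) *)
by have := card_deg3; have := m23_eq; have := m33_le_card_deg3; lia.
Qed.

Lemma regular_of_no_leaf_edges : m 1 2 + m 1 3 = 0 -> forall v, deg e v = 2.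
Proof.
move=> no_leaf v.
have /cards0_eq/setP/(_ v) : deg_count 1 = 0 by rewrite -card_deg1.
have /cards0_eq/setP/(_ v) : deg_count 3 = 0.
  by have := card_deg3; have := m23_eq; lia.
rewrite !inE; have := deg_le3 v; have := deg_gt0 e_conn v (ltnW n_gt2).
by case: (deg e v) => [|[|[|[|]]]].
Qed.

Local Open Scope ring_scope.

Lemma topo_index_unicyclic (R : comPzRingType) (c12 c13 c22 c23 c33 : R) :
  topo_index c12 c13 c22 c23 c33 e =
    c22 * n%:R + (c12 - 4%:R * c22 + 3%:R * c23) * (m 1 2)%:R
    + (c13 - 3%:R * c22 + 2%:R * c23) * (m 1 3)%:R
    + (c22 - 2%:R * c23 + c33) * (m 3 3)%:R.
Proof.
have m23R : (m 2 3)%:R = 3%:R * (m 1 2)%:R + 2%:R * (m 1 3)%:R - 2%:R * (m 3 3)%:R :> R.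
  by rewrite -!natrM -natrD -m23_eq natrD natrM addrK.
have nR : n%:R = (m 1 2)%:R + (m 1 3)%:R + (m 2 2)%:R + (m 2 3)%:R + (m 3 3)%:R :> R.
  by rewrite -!natrD edge_count.
by rewrite nR /topo_index m23R; ring.
Qed.

End Unicyclic.

Lemma cycle_graphE n (x y : 'I_n) :
  @cycle_graph n x y = (y == ordS x) || (y == ord_pred x).
Proof.
by rewrite -[y == ord_pred x](inj_eq (@ordS_inj n)) ord_predK [ordS y == x]eq_sym.
Qed.

Section TwoRegularWalk.
Variables (n : nat) (e : rel 'I_n).
Hypothesis e_sym : forall x y, e x y = e y x.
Hypothesis e_irr : forall x, ~~ e x x.
Hypothesis e_conn : connected_graph e.
Hypothesis deg2 : forall v, deg e v = 2.
Variables x0 x1 : 'I_n.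
Hypothesis e01 : e x0 x1.

Definition other_nbr (b a : 'I_n) : 'I_n := odflt a [pick w | e b w && (w != a)].

Lemma other_nbrP b a : e b a -> e b (other_nbr b a) && (other_nbr b a != a).
Proof.
move=> eba; rewrite /other_nbr; case: pickP => [w -> //| none].
have : 1 < deg e b by rewrite deg2.
move=> /card_gt1P [x [y [+ + xy]]]; rewrite !inE => ebx eby.
have := none x; have := none y; rewrite ebx eby /=.
by case: (eqVneq x a) => [xa|_ //]; rewrite -xa eq_sym xy.
Qed.

Lemma deg2_nbrE b a x : e b a -> e b x = (x == a) || (x == other_nbr b a).
Proof.
move=> eba; have /andP [ebo oa] := other_nbrP eba.
rewrite (@neighborsE _ _ b [set a; other_nbr b a]) ?inE //.
  by apply/subsetP => w; rewrite !inE => /orP [] /eqP ->.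
by rewrite deg2 cards2 eq_sym oa.
Qed.

Definition walk_step (p : 'I_n * 'I_n) := (p.2, other_nbr p.2 p.1).
Definition walk_state k := iter k walk_step (x0, x1).
Definition walk k := (walk_state k).1.

Lemma walk_stateE k : walk_state k = (walk k, walk k.+1).
Proof. by rewrite [LHS]surjective_pairing. Qed.

Lemma walk_SS k : walk k.+2 = other_nbr (walk k.+1) (walk k).
Proof. by rewrite {1}/walk /walk_state iterS -/(walk_state k.+1) walk_stateE. Qed.

Lemma walk_adj k : e (walk k) (walk k.+1).
Proof.
elim: k => [//|k IH]; rewrite walk_SS.
by rewrite e_sym in IH; case/andP: (other_nbrP IH).
Qed.

Lemma walk_nback k : walk k.+2 != walk k.
Proof.
by have := walk_adj k; rewrite e_sym walk_SS => /other_nbrP /andP [].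
Qed.

Lemma walk_nbrE k x : e (walk k.+1) x = (x == walk k) || (x == walk k.+2).
Proof. by rewrite walk_SS (@deg2_nbrE _ (walk k)) // e_sym walk_adj. Qed.

(* The vertex visited just before the repeat is a neighbour of [walk i], hence
   [walk i.-1] or [walk i.+1]; both contradict [uniq] unless [i = 0]. *)
Lemma walk_repeat_at0 j i : uniq (mkseq walk j) -> i < j -> walk j = walk i -> i = 0.
Proof.
move=> /mkseq_uniqP inj; case: i => [//|i] lt_ij Eji.
case: j inj lt_ij Eji => [//|j] inj lt_ij Eji.
have : e (walk i.+1) (walk j) by rewrite -Eji e_sym walk_adj.
rewrite walk_nbrE => /orP [] /eqP Eij.
  by have := inj j i (ltnSn j) (ltnW lt_ij) Eij; lia.
have [lt_i2j|ge_i2j] := ltnP i.+2 j.+1.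
  have ji := inj _ _ (ltnSn j) lt_i2j Eij.
  by move: (walk_nback i.+1); rewrite -ji Eji eqxx.
have ji : j = i.+1 by lia.
by subst j; move: (walk_adj i.+1); rewrite -Eij (negbTE (e_irr _)).
Qed.

Lemma walk_first_return j :
  uniq (mkseq walk j) -> walk j \in mkseq walk j -> walk_state j = walk_state 0.
Proof.
move=> uniq_j /mapP [i]; rewrite mem_iota add0n => /andP [_ lt_ij] Eji.
have i0 := walk_repeat_at0 uniq_j lt_ij Eji; subst i.
rewrite !walk_stateE Eji; congr pair.
have /mkseq_uniqP inj := uniq_j.
case: j uniq_j inj lt_ij Eji => [//|j] _ inj _ Ej.
have : e (walk j.+1) (walk 1) by rewrite Ej walk_adj.
rewrite walk_nbrE => /orP [] /eqP E1; last by rewrite E1.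
case: j inj Ej E1 => [|j] inj Ej E1.
  by move: (walk_adj 0); rewrite E1 (negbTE (e_irr _)).
have j0 := inj _ _ (isT : 1 < j.+2) (ltnSn _) E1; case: j0 => j0; subst j.
by move: (walk_nback 0); rewrite Ej eqxx.
Qed.

Section Period.
Variable j : nat.
Hypothesis period : walk_state j = walk_state 0.

Lemma walk_addn m : walk (m + j) = walk m.
Proof. by rewrite /walk /walk_state iterD -/(walk_state j) period. Qed.

Lemma walk_modn m : walk (m %% j) = walk m.
Proof.
rewrite {2}(divn_eq m j) addnC; elim: (m %/ j) => [|q IH]; first by rewrite addn0.
by rewrite mulSnr addnA walk_addn.
Qed.

Lemma walk_period_nbrE (k : 'I_j) x :
  e (walk k) x = (x == walk (ordS k)) || (x == walk (ord_pred k)).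
Proof.
have kjE : k + j = (k + j).-1.+1 by have := ltn_ord k; lia.
rewrite /= !walk_modn -[in LHS](walk_addn k) kjE walk_nbrE orbC.
by rewrite -kjE -addSn walk_addn.
Qed.

Lemma walk_period_eq : 0 < j -> uniq (mkseq walk j) -> j = n.
Proof.
move=> j_gt0 uniq_j.
have walk_in k : k < j -> walk k \in [set y in mkseq walk j].
  by move=> lt_kj; rewrite inE; apply: map_f; rewrite mem_iota.
have closed u x : u \in [set y in mkseq walk j] -> e u x -> x \in [set y in mkseq walk j].
  rewrite inE => /mapP [k]; rewrite mem_iota add0n => /andP [_ lt_kj] ->.
  by rewrite (walk_period_nbrE (Ordinal lt_kj)) => /orP [] /eqP ->; apply: walk_in.
have walkT := connected_closed_setT e_conn (walk_in 0 j_gt0) closed.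
have /card_uniqP := uniq_j.
by rewrite -cardsE walkT cardsT card_ord size_mkseq.
Qed.

End Period.

Lemma walk_closes :
  exists2 j, 0 < j & uniq (mkseq walk j) /\ walk_state j = walk_state 0.
Proof.
have bounded j : uniq (mkseq walk j) -> j <= n.
  move=> /card_uniqP; rewrite size_mkseq => <-.
  by rewrite (leq_trans (max_card _)) ?card_ord.
have [j uniq_j jmax] := ex_maxnP (ex_intro (fun j => uniq (mkseq walk j)) 0 isT) bounded.
have : ~~ uniq (mkseq walk j.+1) by apply/negP => /jmax; rewrite ltnn.
rewrite mkseqS rcons_uniq uniq_j andbT negbK => repeat_j.
exists j; first by case: j repeat_j {uniq_j jmax}.
by split; last exact: walk_first_return.
Qed.

Lemma walk_iso_cycle : graph_iso e (@cycle_graph n).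
Proof.
have [j j_gt0 [uniq_j period]] := walk_closes.
have jn := walk_period_eq period j_gt0 uniq_j; subst j.
have /mkseq_uniqP inj := uniq_j.
pose g (k : 'I_n) : 'I_n := walk k.
have g_inj : injective g.
  by move=> k l /(inj _ _ (ltn_ord k) (ltn_ord l)); apply: val_inj.
have gE k l : e (g k) (g l) = @cycle_graph n k l.
  rewrite walk_period_nbrE //.
  by rewrite -/(g l) -/(g (ordS k)) -/(g (ord_pred k)) !(inj_eq g_inj) cycle_graphE.
exists (invF g_inj); split; first exact/injF_bij/(can_inj (f_invF g_inj)).
by move=> x y; rewrite -gE !f_invF.
Qed.

End TwoRegularWalk.

Lemma two_regular_iso_cycle n (e : rel 'I_n) :
  (forall x y, e x y = e y x) -> (forall x, ~~ e x x) -> connected_graph e ->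
  0 < n -> (forall v, deg e v = 2) -> graph_iso e (@cycle_graph n).
Proof.
move=> e_sym e_irr e_conn n_gt0 deg2.
have /card_gt0P [x1] : 0 < deg e (Ordinal n_gt0) by rewrite deg2.
by rewrite inE => /(walk_iso_cycle e_sym e_irr e_conn deg2).
Qed.

Section CycleGraph.
Variable n : nat.
Hypothesis n_gt2 : 2 < n.
Local Notation C := (@cycle_graph n).

Lemma ordS_val (x : 'I_n) : val (ordS x) = if x.+1 == n then 0 else x.+1.
Proof.
rewrite /=; case: eqP => [->|ne]; first by rewrite modnn.
by rewrite modn_small //; have := ltn_ord x; lia.
Qed.

Lemma cycle_irr x : ~~ C x x.
Proof.
rewrite cycle_graphE -[x == ord_pred x](inj_eq (@ordS_inj n)) ord_predK.
rewrite [ordS x == x]eq_sym orbb.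
by rewrite -val_eqE ordS_val; have := ltn_ord x; case: (x.+1 =P n) => /=; lia.
Qed.

Lemma cycle_deg x : deg C x = 2.
Proof.
rewrite /deg; have -> : [set y | C x y] = [set ordS x; ord_pred x].
  by apply/setP => y; rewrite !inE cycle_graphE.
have neq : ordS x != ord_pred x.
  rewrite -(inj_eq (@ordS_inj n)) ord_predK -val_eqE !ordS_val; have := ltn_ord x.
  case: (x.+1 =P n) => [xn|_] /=; last by case: (x.+2 =P n) => /=; lia.
  by rewrite ifF; [lia | apply/eqP; lia].
by rewrite cards2 neq.
Qed.

Lemma cycle_connected : connected_graph C.
Proof.
have n_gt0 : 0 < n by lia.
have from0 k (lt_kn : k < n) : connect C (Ordinal n_gt0) (Ordinal lt_kn).
  elim: k lt_kn => [|k IH] lt_kn.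
    by rewrite (_ : Ordinal lt_kn = Ordinal n_gt0) //; apply: val_inj.
  apply: connect_trans (IH (ltnW lt_kn)) (connect1 _).
  by rewrite /cycle_graph /= modn_small ?eqxx.
move=> [k lt_kn] [l lt_ln]; apply: connect_trans (from0 l lt_ln).
by rewrite (sym_connect_sym (fun x y => orbC _ _)).
Qed.

Lemma cycle_in_G3 : @in_G3 n n C.
Proof.
have C_sym x y : C x y = C y x by rewrite /cycle_graph orbC.
split; first by split; [exact: C_sym | exact: cycle_irr].
split; first exact: cycle_connected.
split; last by move=> v; rewrite cycle_deg.
by have := num_edges_regular C_sym cycle_irr cycle_deg; lia.
Qed.

Lemma topo_index_cycle (R : comPzRingType) (c12 c13 c22 c23 c33 : R) :
  topo_index c12 c13 c22 c23 c33 C = (c22 * n%:R)%R.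
Proof.
rewrite (topo_index_unicyclic n_gt2 cycle_in_G3) !(m_ij_regular _ cycle_deg) //.
by rewrite !mulr0 !addr0.
Qed.

End CycleGraph.

Local Open Scope ring_scope.

Lemma weighted_sum_gt0 (R : realFieldType) (x y z a b c : R) :
  Num.max 0 (- z) < Num.min x y -> 0 <= a -> 0 <= b -> 0 <= c -> c <= a + b ->
  0 < a + b -> 0 < x * a + y * b + z * c.
Proof.
rewrite lt_min !gt_max => /andP [/andP [x_gt0 zx] /andP [y_gt0 zy]].
move=> a_ge0 b_ge0 c_ge0 cab ab_gt0.
have pos2 x' y' : 0 < x' -> 0 < y' -> 0 < x' * a + y' * b.
  by move=> x'_gt0 y'_gt0; have [a_gt0 | a_le0] := ltP 0 a; nra.
have [z_ge0 | z_lt0] := leP 0 z.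
  by have := pos2 _ _ x_gt0 y_gt0; have := mulr_ge0 z_ge0 c_ge0; lra.
have zc : z * (a + b) <= z * c by rewrite ler_wnM2l // ltW.
have : 0 < (x + z) * a + (y + z) * b by apply: pos2; lra.
rewrite !mulrDl mulrDr in zc *; lra.
Qed.

Theorem theorem2 (R : realFieldType) (c12 c13 c22 c23 c33 : R) (n : nat) :
  (3 <= n)%N ->
  let c12' := c12 - 4%:R * c22 + 3%:R * c23 in
  let c13' := c13 - 3%:R * c22 + 2%:R * c23 in
  let c33' := c22 - 2%:R * c23 + c33 in
  Num.max 0 (- c33') < Num.min c12' c13' ->
  @in_G3 n n ((@cycle_graph n)) /\
  (forall e : rel 'I_n, @in_G3 n n e ->
     topo_index c12 c13 c22 c23 c33 ((@cycle_graph n))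
       <= topo_index c12 c13 c22 c23 c33 e /\
     (topo_index c12 c13 c22 c23 c33 e
        = topo_index c12 c13 c22 c23 c33 ((@cycle_graph n)) ->
      graph_iso e ((@cycle_graph n)))).
Proof.
move=> n_gt2 c12' c13' c33' hc; split; first exact: cycle_in_G3.
move=> e e_G3; rewrite topo_index_cycle // topo_index_unicyclic // -/c12' -/c13' -/c33'.
have m33_le := m33_le_leaf_edges n_gt2 e_G3.
have [no_leaf | leaf] := posnP (m_ij e 1 2 + m_ij e 1 3).
  have [-> -> ->] : [/\ m_ij e 1 2 = 0, m_ij e 1 3 = 0 & m_ij e 3 3 = 0]%N by split; lia.
  rewrite !mulr0 !addr0; split=> // _.
  have [[e_sym e_irr] [e_conn _]] := e_G3.
  by apply: two_regular_iso_cycle => //; [lia | exact: regular_of_no_leaf_edges no_leaf].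
have pos : 0 < c12' * (m_ij e 1 2)%:R + c13' * (m_ij e 1 3)%:R + c33' * (m_ij e 3 3)%:R.
  by apply: weighted_sum_gt0; rewrite // -natrD ?ler_nat ?ltr0n.
by split=> [|eq_index]; lra.
Qed.
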